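(* For $n\ge 3$: $\chi'_{m\Sigma}(K_n)=3$ if $n$ is odd; $\chi'_{m\Sigma}(K_n)=4$ if $n$ is even and $n\ge 6$; and $\chi'_{m\Sigma}(K_4)=5$.
   Context: A $k$-edge-coloring of $G$ is any map $c:E(G)\to\{1,\dots,k\}$ (adjacent edges may share colors). It induces $\sigma_c(v)=\sum_{u\in N(v)}c(vu)$. The coloring is neighbor sum distinguishing (NSD) if $\sigma_c(u)\ne\sigma_c(v)$ for every edge $uv$. It is majority if every vertex $v$ is incident to at most $d(v)/2$ edges of each single color. $\chi'_{m\Sigma}(G)$ denotes the least $k$ such that $G$ has a $k$-edge-coloring that is both majority and NSD. *)

From mathcomp Require Import all_boot all_order.
Set Implicit Arguments. Unset Strict Implicit. Unset Printing Implicit Defensive.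

(* An edge uv is identified with the
   2-element set [set u; v]; an edge-coloring is thus a function on sets
   (only its values on edges matter). *)

Definition simple_graph (T : finType) (adj : rel T) : Prop :=
  (forall u v, adj u v = adj v u) /\ (forall v, ~~ adj v v).

Definition complete_graph (n : nat) : rel 'I_n := fun u v => u != v.
Arguments complete_graph n : clear implicits.

Definition deg (T : finType) (adj : rel T) (v : T) : nat := #|[set u | adj v u]|.

Definition is_k_edge_coloring (T : finType) (adj : rel T) (k : nat)
    (c : {set T} -> nat) : Prop :=
  forall u v, adj u v -> 1 <= c [set u; v] <= k.

Definition sigma (T : finType) (adj : rel T) (c : {set T} -> nat) (v : T) : nat :=
  \sum_(u | adj v u) c [set v; u].

Definition nsd (T : finType) (adj : rel T) (c : {set T} -> nat) : Prop :=
  forall u v, adj u v -> sigma adj c u <> sigma adj c v.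

Definition majority (T : finType) (adj : rel T) (c : {set T} -> nat) : Prop :=
  forall (v : T) (i : nat), 2 * #|[set u | adj v u & c [set v; u] == i]| <= deg adj v.

Definition has_mNSD_coloring (T : finType) (adj : rel T) (k : nat) : Prop :=
  exists c : {set T} -> nat,
    [/\ is_k_edge_coloring adj k c, majority adj c & nsd adj c].

Definition chi_mSigma_eq (T : finType) (adj : rel T) (k : nat) : Prop :=
  has_mNSD_coloring adj k /\ (forall j, j < k -> ~ has_mNSD_coloring adj j).

(* Lower bounds: the majority condition bounds every colour class at a vertex of K_n by
   (n - 1)/2, which leaves the vertex sums too few possible values to be pairwise distinct.
   With two colours every sum equals 3(n - 1)/2; with three colours and n = 2m + 2 the sums
   lie in [3m + 3, 5m + 1]; in K_4 with four colours each vertex sees three distinct colours,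
   so its sum is 6 exactly when colour 4 is missing, and the sums 6, 7, 8, 9 would make
   colour 4 appear at exactly three vertices, which contradicts the handshake lemma.

   Upper bounds: the colourings are built by adding two vertices at a time. Every old vertex
   receives two new edges of fixed total colour, so its sum is shifted by a constant, while
   the two new vertices get sums below and above all the old ones; this keeps the sums
   distinct, and the new colours are balanced enough to keep the majority condition. The
   even case starts from an explicit colouring of K_6; K_4 is coloured explicitly. *)

From mathcomp Require Import all_boot all_order zify.

Set Implicit Arguments.
Unset Strict Implicit.
Unset Printing Implicit Defensive.

Lemma is_k_edge_coloring_leq (T : finType) (adj : rel T) j k c :
  j <= k -> is_k_edge_coloring adj j c -> is_k_edge_coloring adj k c.
Proof. by move=> jk Hc u v /Hc /andP[-> /leq_trans]; apply. Qed.

Lemma has_mNSD_coloring_leq (T : finType) (adj : rel T) j k :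
  j <= k -> has_mNSD_coloring adj j -> has_mNSD_coloring adj k.
Proof.
by move=> jk [c [Hc Hm Hn]]; exists c; split=> //; apply: is_k_edge_coloring_leq Hc.
Qed.

Lemma chi_mSigma_eq_intro (T : finType) (adj : rel T) k :
  has_mNSD_coloring adj k -> ~ has_mNSD_coloring adj k.-1 -> chi_mSigma_eq adj k.
Proof.
move=> Hk Hlt; split=> // j jk Hj; apply: Hlt.
by apply: has_mNSD_coloring_leq Hj; rewrite -ltnS prednK // (leq_ltn_trans _ jk).
Qed.

(** * Colour degrees and the lower bounds *)

Lemma sum_sym_even (T : finType) (Y : T -> T -> nat) :
  (forall v u, Y v u = Y u v) -> (forall v, Y v v = 0) ->
  ~~ odd (\sum_v \sum_u Y v u).
Proof.
move=> Ysym Y0; pose below (v u : T) : nat := enum_rank v < enum_rank u.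
have splitY v u : Y v u = Y v u * below v u + Y u v * below u v.
  rewrite /below [Y u v]Ysym.
  by case: ltngtP => [||/val_inj/enum_rank_inj->]; rewrite ?Y0 ?muln0 ?muln1 ?addn0.
rewrite (eq_bigr (fun v => \sum_u (Y v u * below v u + Y u v * below u v))); last first.
  by move=> v _; apply: eq_bigr => u _; apply: splitY.
under eq_bigr do rewrite big_split /=.
by rewrite big_split /= [X in _ + X]exchange_big addnn odd_double.
Qed.

Section ColorDegrees.

Variables (T : finType) (adj : rel T) (c : {set T} -> nat).

Definition color_deg (v : T) (i : nat) : nat :=
  #|[set u | adj v u & c [set v; u] == i]|.

Lemma color_degE v i : color_deg v i = \sum_(u | adj v u) (c [set v; u] == i).
Proof.
rewrite /color_deg -sum1_card big_mkcond [RHS]big_mkcond /=.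
by apply: eq_bigr => u _; rewrite inE; case: (adj v u); case: (_ == i).
Qed.

Lemma sum_color_deg_even i : simple_graph adj -> ~~ odd (\sum_v color_deg v i).
Proof.
case=> adjC adj_irr.
rewrite (eq_bigr (fun v => \sum_u (adj v u && (c [set v; u] == i) : nat))); last first.
  by move=> v _; rewrite color_degE big_mkcond; apply: eq_bigr => u _; case: adj.
apply: sum_sym_even => [v u|v]; first by rewrite adjC setUC.
by rewrite (negbTE (adj_irr v)).
Qed.

Variable k : nat.
Hypothesis c_col : is_k_edge_coloring adj k c.

Lemma sum_nbr_color_deg (F : nat -> nat) v :
  \sum_(u | adj v u) F (c [set v; u]) = \sum_(1 <= i < k.+1) F i * color_deg v i.
Proof.
under [RHS]eq_bigr do rewrite color_degE big_distrr /=.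
rewrite exchange_big; apply: eq_bigr => u vu.
rewrite (eq_bigr (fun i => if i == c [set v; u] then F i else 0)); last first.
  by move=> i _; rewrite eq_sym; case: eqP; rewrite ?muln1 ?muln0.
by rewrite -big_mkcond big_nat1_eq ltnS (c_col vu).
Qed.

Lemma deg_color_deg v : deg adj v = \sum_(1 <= i < k.+1) color_deg v i.
Proof.
under eq_bigr do rewrite -[color_deg _ _]mul1n.
by rewrite -sum_nbr_color_deg /deg -sum1_card; apply: eq_bigl => u; rewrite inE.
Qed.

Lemma sigma_color_deg v : sigma adj c v = \sum_(1 <= i < k.+1) i * color_deg v i.
Proof. exact: sum_nbr_color_deg. Qed.

End ColorDegrees.

Lemma complete_graph_simple n : simple_graph (complete_graph n).
Proof. by split=> [u v|v]; rewrite /complete_graph ?eqxx // eq_sym. Qed.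

Lemma deg_complete n (v : 'I_n) : deg (complete_graph n) v = n.-1.
Proof.
rewrite /deg -[in RHS](card_ord n) -(cardsC1 v); apply: eq_card => u.
by rewrite !inE /complete_graph eq_sym.
Qed.

Lemma complete_majority n c (v : 'I_n) i :
  majority (complete_graph n) c -> 2 * color_deg (complete_graph n) c v i <= n.-1.
Proof. by rewrite -(deg_complete v); apply. Qed.

Lemma complete_nsd_inj n c :
  nsd (complete_graph n) c -> injective (sigma (complete_graph n) c).
Proof. by move=> Hn u v E; apply/eqP; apply: contraT => uv; case: (Hn u v uv E). Qed.

Lemma leq_inj_interval n (f : 'I_n -> nat) lo len : injective f ->
  (forall v, lo <= f v < lo + len) -> n <= len.
Proof.
move=> f_inj f_bd.
have := @uniq_leq_size _ (map f (enum 'I_n)) (iota lo len).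
rewrite map_inj_uniq // enum_uniq size_map size_enum_ord size_iota; apply=> // x.
by case/mapP=> v _ ->; rewrite mem_iota.
Qed.

Lemma complete_no_mNSD2 n : 1 < n -> ~ has_mNSD_coloring (complete_graph n) 2.
Proof.
move=> n_gt1 [c [Hc Hm /complete_nsd_inj Hn]].
have sigma_const (v : 'I_n) : 2 * sigma (complete_graph n) c v = 3 * n.-1.
  have := deg_color_deg Hc v; rewrite deg_complete (sigma_color_deg Hc).
  have := complete_majority v 1 Hm; have := complete_majority v 2 Hm.
  rewrite unlock /=; lia.
pose v0 : 'I_n := Ordinal (ltnW n_gt1); pose v1 : 'I_n := Ordinal n_gt1.
have /eqP := sigma_const v0; rewrite -(sigma_const v1) eqn_mul2l /=.
by move=> /eqP /Hn [].
Qed.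

Lemma complete_even_no_mNSD3 n :
  0 < n -> ~~ odd n -> ~ has_mNSD_coloring (complete_graph n) 3.
Proof.
move=> n_gt0 n_even [c [Hc Hm /complete_nsd_inj Hn]].
have [m n_eq] : exists m, n = m.*2.+2.
  by exists n./2.-1; rewrite -[n in n = _]odd_double_half (negbTE n_even); lia.
have deg_eq : n.-1 = m.*2.+1 by rewrite n_eq.
suff /(leq_inj_interval Hn) :
    forall v, 3 * m + 3 <= sigma (complete_graph n) c v < 3 * m + 3 + (2 * m - 1).
  by rewrite n_eq; lia.
move=> v; have := deg_color_deg Hc v; rewrite deg_complete deg_eq (sigma_color_deg Hc).
have := complete_majority v 1 Hm; have := complete_majority v 2 Hm.
have := complete_majority v 3 Hm; rewrite deg_eq unlock /=; lia.
Qed.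

Lemma K4_no_mNSD4 : ~ has_mNSD_coloring (complete_graph 4) 4.
Proof.
move=> [c [Hc Hm /complete_nsd_inj Hn]].
set s := sigma (complete_graph 4) c in Hn *.
have profile (v : 'I_4) :
    6 <= s v <= 9 /\ color_deg (complete_graph 4) c v 4 = (s v != 6).
  have := deg_color_deg Hc v; rewrite deg_complete /s (sigma_color_deg Hc).
  have := complete_majority v 1 Hm; have := complete_majority v 2 Hm.
  have := complete_majority v 3 Hm; have := complete_majority v 4 Hm.
  by rewrite unlock /=; case: eqP; lia.
have [v0 /eqP s_v0 | no6] := pickP (fun v => s v == 6).
- have := sum_color_deg_even c 4 (complete_graph_simple 4).
  rewrite (eq_bigr (fun v => (v != v0) : nat)); last first.
    by move=> v _; rewrite (proj2 (profile v)) -s_v0 (inj_eq Hn).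
  rewrite (bigD1 v0) //= eqxx add0n (eq_bigr (fun=> 1)) => [|v /negbTE->] //.
  by rewrite sum1_card cardC1 card_ord.
- have /(leq_inj_interval Hn) // : forall v, 7 <= s v < 7 + 3.
  by move=> v; have := no6 v; have := profile v; move=> [] /andP[]; case: eqP; lia.
Qed.

(** * Colourings of K_n given by functions on pairs of naturals *)

Definition sym (h : nat -> nat -> nat) (v u : nat) : nat :=
  if v < u then h v u else if u < v then h u v else 0.

Lemma symC h v u : sym h v u = sym h u v.
Proof. by rewrite /sym; case: ltngtP. Qed.

Lemma symxx h v : sym h v v = 0.
Proof. by rewrite /sym ltnn. Qed.

Lemma sym_range h k v u :
  (forall i j, 1 <= h i j <= k) -> v != u -> 1 <= sym h v u <= k.
Proof. by move=> h_rng; rewrite /sym; case: (ltngtP v u). Qed.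

Definition pair_coloring n (h : nat -> nat -> nat) (S : {set 'I_n}) : nat :=
  \sum_(x in S) \sum_(y in S | x < y) h x y.

Lemma pair_coloring2 n h (x y : 'I_n) :
  x != y -> pair_coloring h [set x; y] = sym h x y.
Proof.
move=> xy; have xy' : x \notin [set y] by rewrite inE.
rewrite /pair_coloring big_setU1 //= big_set1 !big_mkcondr !big_setU1 //= !big_set1 !ltnn.
by rewrite /sym; have : x != y :> nat by []; case: ltngtP => //= _ _; rewrite ?addn0.
Qed.

Definition row_sum (g : nat -> nat -> nat) (N v : nat) : nat := \sum_(0 <= u < N) g v u.

(* The diagonal entry, [0] when [g = sym h], is counted as well; hence [0 < i] below. *)
Definition row_count (g : nat -> nat -> nat) (N v i : nat) : nat :=
  \sum_(0 <= u < N) (g v u == i).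

Lemma sum_complete_nbr n (v : 'I_n) (F : nat -> nat) : F v = 0 ->
  \sum_(u | complete_graph n v u) F u = \sum_(0 <= u < n) F u.
Proof.
move=> Fv; rewrite big_mkord [RHS](bigD1 v) //= Fv add0n.
by apply: eq_bigl => u; rewrite /complete_graph eq_sym.
Qed.

Lemma complete_mNSD_of_pairs n k h :
  (forall v u, v < n -> u < n -> v != u -> 1 <= sym h v u <= k) ->
  (forall v i, v < n -> 0 < i -> 2 * row_count (sym h) n v i <= n.-1) ->
  {in gtn n &, injective (row_sum (sym h) n)} ->
  has_mNSD_coloring (complete_graph n) k.
Proof.
move=> h_col h_maj h_inj.
have nbrE (v : 'I_n) (F : nat -> nat) : F 0 = 0 ->
    \sum_(u | complete_graph n v u) F (pair_coloring h [set v; u])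
    = \sum_(0 <= u < n) F (sym h v u).
  move=> F0; rewrite -(@sum_complete_nbr n v (fun u => F (sym h v u))) /= ?symxx //.
  by apply: eq_bigr => u vu; rewrite pair_coloring2.
exists (pair_coloring h); split.
- by move=> u v uv; rewrite pair_coloring2 //; apply: h_col.
- move=> v i; rewrite deg_complete -/(color_deg _ _ v i) color_degE.
  case: i => [|i]; last by rewrite (nbrE v (fun x => x == i.+1)) //; apply: h_maj.
  rewrite big1 // => u vu; rewrite pair_coloring2 //.
  by case/andP: (h_col v u (ltn_ord v) (ltn_ord u) vu); case: sym.
- move=> u v uv; rewrite /sigma !(nbrE _ id) // => /(h_inj _ _ (ltn_ord u) (ltn_ord v)).
  by move/val_inj => uv_eq; rewrite uv_eq /complete_graph eqxx in uv.
Qed.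

Lemma all_iota_lt (P : pred nat) N : all P (iota 0 N) -> forall v, v < N -> P v.
Proof. by move/allP=> P_all v vN; apply: P_all; rewrite mem_iota. Qed.

Definition row_check (g : nat -> nat -> nat) (n k b : nat) : bool :=
  all (fun v => all (fun i => row_count g n v i <= b) (iota 1 k)) (iota 0 n) &&
  all (fun v => all (fun w => (row_sum g n v == row_sum g n w) ==> (v == w)) (iota 0 n))
    (iota 0 n).

Lemma row_checkP h n k b :
  (forall i j, 1 <= h i j <= k) -> row_check (sym h) n k b ->
  (forall v i, v < n -> 0 < i -> row_count (sym h) n v i <= b) /\
  {in gtn n &, injective (row_sum (sym h) n)}.
Proof.
move=> h_rng /andP[/all_iota_lt counts /all_iota_lt sums].
split=> [v i vN i_gt0 | v w vN wN].
  have [k_lt_i|i_le_k] := ltnP k i.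
    rewrite /row_count big1 // => u _; case: eqP => // gi.
    have h_le x y : h x y <= k by case/andP: (h_rng x y).
    by move: k_lt_i; rewrite -gi /sym; case: (ltngtP v u) => _; rewrite ?ltnNge ?h_le.
  by move/allP: (counts v vN) => /(_ i); rewrite mem_iota add1n i_gt0 ltnS; apply.
move/allP: (sums v vN) => /(_ w); rewrite mem_iota => /(_ wN) /implyP sums_vw.
by move=> /eqP /sums_vw /eqP.
Qed.

Definition col_K4 (i j : nat) : nat :=
  match i, j with
  | 0, 1 => 1 | 0, 2 => 2 | 0, 3 => 3 | 1, 2 => 3 | 1, 3 => 4 | 2, 3 => 5
  | _, _ => 1
  end.

Lemma col_K4_range i j : 1 <= col_K4 i j <= 5.
Proof. by case: i => [|[|[|i]]]; case: j => [|[|[|[|j]]]]. Qed.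

Lemma K4_mNSD5 : has_mNSD_coloring (complete_graph 4) 5.
Proof.
have check : row_check (sym col_K4) 4 5 1 by rewrite /row_check /row_count /row_sum unlock.
have [maj inj] := row_checkP col_K4_range check.
apply: complete_mNSD_of_pairs inj => [v u _ _ | v i vN i_gt0].
  exact/sym_range/col_K4_range.
by have := maj v i vN i_gt0; lia.
Qed.

(** * Adding two vertices at a time *)

Lemma ltSS_cases N v : v < N.+2 -> [\/ v < N, v = N | v = N.+1].
Proof.
by case: (ltngtP v N) => [|vN|->]; [constructor 1 | constructor 3; lia | constructor 2].
Qed.

Lemma sum_recr2 (F : nat -> nat) N :
  \sum_(0 <= u < N.+2) F u = \sum_(0 <= u < N) F u + F N + F N.+1.
Proof. by rewrite !big_nat_recr. Qed.

Definition spread (s : nat -> nat) (N L U : nat) : Prop :=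
  (forall v, v < N -> L <= s v <= U) /\ {in gtn N &, injective s}.

Lemma spread_extend (s s' : nat -> nat) N d L U L' U' : L <= U ->
  spread s N L U -> (forall v, v < N -> s' v = s v + d) ->
  L' <= s' N < L + d -> U + d < s' N.+1 <= U' ->
  spread s' N.+2 L' U'.
Proof.
move=> LU [s_bd s_inj] s'E /andP[L'N NL] /andP[UN NU'].
have old_between v : v < N -> s' N < s' v < s' N.+1.
  by move=> vN; rewrite (s'E v vN); have := s_bd v vN; lia.
split=> [v /ltSS_cases[/old_between|->|->] | v w]; try lia.
rewrite !inE => /ltSS_cases[vN|->|->] /ltSS_cases[wN|->|->] //;
  try by move: (old_between v) (old_between w); lia.
by rewrite (s'E v vN) (s'E w wN) => /addIn; apply: s_inj.
Qed.

(** * Odd order *)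

Definition level (u : nat) : nat := u.+1./2.

Lemma level_new_lo m : level m.*2.+1 = m.+1.
Proof. rewrite /level; lia. Qed.

Lemma level_new_hi m : level m.*2.+2 = m.+1.
Proof. rewrite /level; lia. Qed.

Lemma sum_level_parity m (p q : nat) :
  \sum_(0 <= u < m.*2.+1) (if odd (level u + m) then q else p) = m.+1 * p + m * q.
Proof.
elim: m p q => [|m IH] p q; first by rewrite big_nat1 /=; lia.
rewrite doubleS sum_recr2 level_new_lo level_new_hi addnn odd_double.
rewrite (eq_bigr (fun u => if odd (level u + m) then p else q)); last first.
  by move=> u _; rewrite addnS /=; case: odd.
rewrite IH; lia.
Qed.

(* Vertex 0 forms level 0 and the vertices 2k-1, 2k form level k. An edge from a lower level
   to level k gets colour 1 (to 2k-1) and 3 (to 2k) if the two levels have opposite parity,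
   and colour 2 otherwise; the two vertices of a level are joined by colour 2. So each new
   level adds 4 to every old sum, while its own vertices get the sums 3k and 5k. *)
Definition col_odd (i j : nat) : nat :=
  if odd j then (if odd (level i + level j) then 1 else 2)
  else if i.+1 == j then 2
  else if odd (level i + level j) then 3 else 2.

Lemma col_odd_range i j : 1 <= col_odd i j <= 3.
Proof. by rewrite /col_odd; do !case: ifP. Qed.

Section OddStep.

Variable m : nat.

Lemma col_odd_new_lo v : v < m.*2.+1 ->
  sym col_odd v m.*2.+1 = if odd (level v + m) then 2 else 1.
Proof.
move=> vN; rewrite /sym vN /col_odd oddS odd_double level_new_lo addnS.
by rewrite oddS; case: odd.
Qed.

Lemma col_odd_new_hi v : v < m.*2.+1 ->
  sym col_odd v m.*2.+2 = if odd (level v + m) then 2 else 3.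
Proof.
move=> vN; rewrite /sym ltnW // /col_odd !oddS odd_double ifF; last by apply/eqP; lia.
by rewrite level_new_hi addnS oddS; case: odd.
Qed.

Lemma col_odd_new_pair : sym col_odd m.*2.+1 m.*2.+2 = 2.
Proof. by rewrite /sym ltnSn /col_odd !oddS odd_double eqxx. Qed.

Lemma col_odd_row_lo (F : nat -> nat) :
  \sum_(0 <= u < m.*2.+3) F (sym col_odd m.*2.+1 u)
  = m.+1 * F 1 + m * F 2 + F 0 + F 2.
Proof.
rewrite sum_recr2 symxx col_odd_new_pair -sum_level_parity.
congr (_ + _ + _); apply: eq_big_nat => u /andP[_ uN].
by rewrite symC col_odd_new_lo //; case: ifP.
Qed.

Lemma col_odd_row_hi (F : nat -> nat) :
  \sum_(0 <= u < m.*2.+3) F (sym col_odd m.*2.+2 u)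
  = m.+1 * F 3 + m * F 2 + F 2 + F 0.
Proof.
rewrite sum_recr2 symxx symC col_odd_new_pair -sum_level_parity.
congr (_ + _ + _); apply: eq_big_nat => u /andP[_ uN].
by rewrite symC col_odd_new_hi //; case: ifP.
Qed.

Lemma col_odd_row_old v (F : nat -> nat) : v < m.*2.+1 ->
  \sum_(0 <= u < m.*2.+3) F (sym col_odd v u)
  = \sum_(0 <= u < m.*2.+1) F (sym col_odd v u)
    + (if odd (level v + m) then F 2 + F 2 else F 1 + F 3).
Proof.
by move=> vN; rewrite sum_recr2 col_odd_new_lo // col_odd_new_hi // -addnA; case: ifP.
Qed.

End OddStep.

Lemma col_odd_spread m :
  spread (row_sum (sym col_odd) m.*2.+1) m.*2.+1 (3 * m) (5 * m).
Proof.
elim: m => [|m IH].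
  by split=> [[]|[|v] [|w]] //; rewrite /row_sum big_nat1 symxx.
rewrite doubleS; apply: (spread_extend (d := 4) _ IH) => [|v vN||].
- lia.
- by rewrite /row_sum (col_odd_row_old id vN); case: ifP.
- rewrite /row_sum (col_odd_row_lo m id); lia.
- rewrite /row_sum (col_odd_row_hi m id); lia.
Qed.

(* The second invariant says which old vertices can absorb two more edges of colour 2. *)
Lemma col_odd_counts m :
  (forall v i, v < m.*2.+1 -> 0 < i -> row_count (sym col_odd) m.*2.+1 v i <= m) /\
  (forall v, v < m.*2.+1 -> odd (level v + m) -> row_count (sym col_odd) m.*2.+1 v 2 < m).
Proof.
elim: m => [|m [IHmaj IHtwo]].
  by split=> [[|v] // i _ i_gt0 | []] //; rewrite /row_count big_nat1 symxx; case: i i_gt0.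
rewrite doubleS /row_count.
split=> [v i /ltSS_cases[vN|->|->] i_gt0 | v /ltSS_cases[vN|->|->]].
- rewrite (col_odd_row_old (fun x => x == i) vN).
  have := IHmaj v i vN i_gt0; have := IHtwo v vN; rewrite /row_count.
  by case: odd; case: i i_gt0 => [|[|[|[|i]]]] //=; lia.
- by rewrite (col_odd_row_lo m (fun x => x == i)); case: i i_gt0 => [|[|[|i]]] //=; lia.
- by rewrite (col_odd_row_hi m (fun x => x == i)); case: i i_gt0 => [|[|[|[|i]]]] //=; lia.
- rewrite (col_odd_row_old (fun x => x == 2) vN) addnS /=.
  by have := IHmaj v 2 vN isT; rewrite /row_count; case: odd => //=; lia.
- by rewrite level_new_lo addnn odd_double.
- by rewrite level_new_hi addnn odd_double.
Qed.

Lemma complete_odd_mNSD3 n : odd n -> has_mNSD_coloring (complete_graph n) 3.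
Proof.
move=> n_odd; have [m ->] : exists m, n = m.*2.+1.
  by exists n./2; rewrite -[n in n = _]odd_double_half n_odd; lia.
have [maj _] := col_odd_counts m; have [_ inj] := col_odd_spread m.
apply: complete_mNSD_of_pairs inj => [v u _ _ | v i vN i_gt0].
  exact/sym_range/col_odd_range.
by have := maj v i vN i_gt0; lia.
Qed.

(** * Even order *)

Definition col_K6 (i j : nat) : nat :=
  match i, j with
  | 0, 1 => 1 | 0, 2 => 1 | 0, 3 => 2 | 0, 4 => 2 | 0, 5 => 3
  | 1, 2 => 1 | 1, 3 => 2 | 1, 4 => 2 | 1, 5 => 4
  | 2, 3 => 3 | 2, 4 => 4 | 2, 5 => 2
  | 3, 4 => 4 | 3, 5 => 1 | 4, 5 => 3
  | _, _ => 1
  end.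

(* For m >= 2 the vertices 2m+2 and 2m+3 are joined to K_(2m+2) as follows: an old vertex
   v <= m gets colours 1 and 4, v = m+1 gets 3 and 2, and the other old vertices get 2 and 3;
   the new pair is joined by colour 2. Every old sum grows by 5, and the new vertices get the
   sums 3m+6 and 7m+8. *)
Definition col_even (i j : nat) : nat :=
  if j < 6 then col_K6 i j else
  let m := j./2.-1 in
  if odd j && (i == m.*2.+2) then 2
  else if i <= m then (if odd j then 4 else 1)
  else if i == m.+1 then (if odd j then 2 else 3)
  else (if odd j then 3 else 2).

Lemma col_even_range i j : 1 <= col_even i j <= 4.
Proof.
rewrite /col_even; case: ifP => _; last by do !case: ifP.
by case: i => [|[|[|[|[|i]]]]]; case: j => [|[|[|[|[|[|j]]]]]].
Qed.

Lemma col_even_K6 :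
  (forall v i, v < 6 -> 0 < i -> row_count (sym col_even) 6 v i <= 2) /\
  spread (row_sum (sym col_even) 6) 6 9 16.
Proof.
have check : row_check (sym col_even) 6 4 2.
  by rewrite /row_check /row_count /row_sum unlock.
have bounds : all (fun v => 9 <= row_sum (sym col_even) 6 v <= 16) (iota 0 6).
  by rewrite /row_sum unlock.
have [counts inj] := row_checkP col_even_range check.
by do 2!split=> //; apply: all_iota_lt bounds.
Qed.

Lemma sum_threshold m (p q r : nat) :
  \sum_(0 <= u < m.*2.+2) (if u <= m then p else if u == m.+1 then q else r)
  = m.+1 * p + q + m * r.
Proof.
rewrite (big_cat_nat _ (n := m.+2)) //=; last by lia.
rewrite big_nat_recr //= ltnn eqxx.
rewrite (eq_big_nat _ _ (F2 := fun=> p)) => [|u /andP[_ /ltnSE->]] //.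
rewrite [X in _ + X](eq_big_nat _ _ (F2 := fun=> r)) => [|u /andP[m_lt_u _]].
  by rewrite !sum_nat_const_nat; lia.
by rewrite !ifF //; lia.
Qed.

Section EvenStep.

Variable m : nat.
Hypothesis m_ge2 : 2 <= m.

Lemma col_even_new_lo v : v < m.*2.+2 ->
  sym col_even v m.*2.+2 = if v <= m then 1 else if v == m.+1 then 3 else 2.
Proof.
move=> vN; rewrite /sym vN /col_even ifF; last by lia.
have -> : (m.*2.+2)./2.-1 = m by lia.
by rewrite !oddS odd_double.
Qed.

Lemma col_even_new_hi v : v < m.*2.+2 ->
  sym col_even v m.*2.+3 = if v <= m then 4 else if v == m.+1 then 2 else 3.
Proof.
move=> vN; rewrite /sym ltnW // /col_even ifF; last by lia.
have -> : (m.*2.+3)./2.-1 = m by lia.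
by rewrite !oddS odd_double /= ifF //; apply/eqP; lia.
Qed.

Lemma col_even_new_pair : sym col_even m.*2.+2 m.*2.+3 = 2.
Proof.
rewrite /sym ltnSn /col_even ifF; last by lia.
have -> : (m.*2.+3)./2.-1 = m by lia.
by rewrite !oddS odd_double eqxx.
Qed.

Lemma col_even_row_lo (F : nat -> nat) :
  \sum_(0 <= u < m.*2.+4) F (sym col_even m.*2.+2 u)
  = m.+1 * F 1 + F 3 + m * F 2 + F 0 + F 2.
Proof.
rewrite sum_recr2 symxx col_even_new_pair -sum_threshold.
congr (_ + _ + _); apply: eq_big_nat => u /andP[_ uN].
by rewrite symC col_even_new_lo //; do !case: ifP.
Qed.

Lemma col_even_row_hi (F : nat -> nat) :
  \sum_(0 <= u < m.*2.+4) F (sym col_even m.*2.+3 u)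
  = m.+1 * F 4 + F 2 + m * F 3 + F 2 + F 0.
Proof.
rewrite sum_recr2 symxx symC col_even_new_pair -sum_threshold.
congr (_ + _ + _); apply: eq_big_nat => u /andP[_ uN].
by rewrite symC col_even_new_hi //; do !case: ifP.
Qed.

Lemma col_even_row_old v (F : nat -> nat) : v < m.*2.+2 ->
  \sum_(0 <= u < m.*2.+4) F (sym col_even v u)
  = \sum_(0 <= u < m.*2.+2) F (sym col_even v u)
    + (if v <= m then F 1 + F 4 else if v == m.+1 then F 3 + F 2 else F 2 + F 3).
Proof.
move=> vN; rewrite sum_recr2 col_even_new_lo // col_even_new_hi // -addnA.
by do !case: ifP.
Qed.

End EvenStep.

Lemma col_even_counts m : 2 <= m ->
  forall v i, v < m.*2.+2 -> 0 < i -> row_count (sym col_even) m.*2.+2 v i <= m.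
Proof.
elim: m => [//|m IH]; rewrite ltnS leq_eqVlt => /orP[/eqP <-|m_ge2].
  exact: col_even_K6.1.
have {}IH := IH m_ge2.
rewrite doubleS /row_count => v i /ltSS_cases[vN|->|->] i_gt0.
- rewrite (col_even_row_old m_ge2 (fun x => x == i) vN).
  have := IH v i vN i_gt0; rewrite /row_count.
  by do !case: ifP => _; case: i i_gt0 => [|[|[|[|[|i]]]]] //=; lia.
- rewrite (col_even_row_lo m_ge2 (fun x => x == i)).
  by case: i i_gt0 => [|[|[|[|i]]]] //=; lia.
- rewrite (col_even_row_hi m_ge2 (fun x => x == i)).
  by case: i i_gt0 => [|[|[|[|[|i]]]]] //=; lia.
Qed.

Lemma col_even_spread m : 2 <= m ->
  spread (row_sum (sym col_even) m.*2.+2) m.*2.+2 (3 * m + 3) (7 * m + 2).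
Proof.
elim: m => [//|m IH]; rewrite ltnS leq_eqVlt => /orP[/eqP <-|m_ge2].
  exact: col_even_K6.2.
rewrite doubleS; apply: (spread_extend (d := 5) _ (IH m_ge2)) => [|v vN||].
- lia.
- by rewrite /row_sum (col_even_row_old m_ge2 id vN); do !case: ifP.
- rewrite /row_sum (col_even_row_lo m_ge2 id); lia.
- rewrite /row_sum (col_even_row_hi m_ge2 id); lia.
Qed.

Lemma complete_even_mNSD4 n :
  6 <= n -> ~~ odd n -> has_mNSD_coloring (complete_graph n) 4.
Proof.
move=> n_ge6 n_even; have [m [-> m_ge2]] : exists m, n = m.*2.+2 /\ 2 <= m.
  by exists n./2.-1; rewrite -[n in n = _]odd_double_half (negbTE n_even); lia.
have [_ inj] := col_even_spread m_ge2.
apply: complete_mNSD_of_pairs inj => [v u _ _ | v i vN i_gt0].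
  exact/sym_range/col_even_range.
by have := col_even_counts m_ge2 vN i_gt0; lia.
Qed.

Theorem mainTheorem8 :
  (forall n : nat, 3 <= n -> odd n -> chi_mSigma_eq (complete_graph n) 3) /\
  (forall n : nat, 6 <= n -> ~~ odd n -> chi_mSigma_eq (complete_graph n) 4) /\
  chi_mSigma_eq (complete_graph 4) 5.
Proof.
split; [|split].
- move=> n n_ge3 n_odd; apply: chi_mSigma_eq_intro.
    exact: complete_odd_mNSD3.
  by apply: complete_no_mNSD2; lia.
- move=> n n_ge6 n_even; apply: chi_mSigma_eq_intro.
    exact: complete_even_mNSD4.
  by apply: complete_even_no_mNSD3; lia.
- by apply: chi_mSigma_eq_intro; [exact: K4_mNSD5 | exact: K4_no_mNSD4].
Qed.
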